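(* In the setting described in the context, let $F$ be strongly convex with respect to $\|\cdot\|_L$ with convexity parameter $\mu>0$. If $x_k$ is the random point generated by UCDC$(x_0)$, then $$\mathbf{E}[F(x_k)-F^*]\leq\left(1-\frac{1-\gamma_\mu}{n}\right)^k(F(x_0)-F^* ),$$ where $\gamma_\mu=1-\frac\mu4$ if $\mu\leq2$ and $\gamma_\mu=\frac1\mu$ otherwise.
   Context: Let $U\in\mathbf{R}^{N\times N}$ be a column permutation of the $N\times N$ identity matrix, partitioned as $U=[U_1,\dots,U_n]$ with $U_i\in\mathbf{R}^{N\times N_i}$, $\sum_iN_i=N$. For $x\in\mathbf{R}^N$ write $x^{(i)}=U_i^Tx$. Each $\mathbf{R}^{N_i}$ carries the norm $\|t\|_{(i)}=\langle B_it,t\rangle^{1/2}$ and dual norm $\|t\|_{(i)}^*=\langle B_i^{-1}t,t\rangle^{1/2}$ with $B_i$ positive definite. Consider minimizing $F(x)=f(x)+\Psi(x)$ over $\mathbf{R}^N$, where $f$ is convex and differentiable with $\|\nabla_if(x+U_it)-\nabla_if(x)\|_{(i)}^*\leq L_i\|t\|_{(i)}$ for all $x,t,i$ (constants $L_i>0$, $\nabla_if(x)=U_i^T\nabla f(x)$), and $\Psi(x)=\sum_i\Psi_i(x^{(i)})$ with each $\Psi_i$ proper closed convex. The problem has a minimizer; $F^*$ is the optimal value. Let $\|x\|_L=(\sum_iL_i\|x^{(i)}\|_{(i)}^2)^{1/2}$. Strong convexity w.r.t. $\|\cdot\|_L$ with parameter $\mu$: $F(x)\geq F(y)+\langle F'(y),x-y\rangle+\frac\mu2\|x-y\|_L^2$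 for all $x,y\in\mathrm{dom}\,F$ and all subgradients $F'(y)$. Algorithm UCDC$(x_0)$: for $k=0,1,2,\dots$, choose $i\in\{1,\dots,n\}$ uniformly at random (independently), compute $T^{(i)}(x_k)=\arg\min_{t\in\mathbf{R}^{N_i}}\{\langle\nabla_if(x_k),t\rangle+\frac{L_i}{2}\|t\|_{(i)}^2+\Psi_i(x_k^{(i)}+t)\}$ and set $x_{k+1}=x_k+U_iT^{(i)}(x_k)$. *)

From HB Require Import structures.
From mathcomp Require Import all_boot all_order all_algebra.
From mathcomp Require Import all_classical all_reals all_analysis.
Set Implicit Arguments. Unset Strict Implicit. Unset Printing Implicit Defensive.
Import Order.TTheory GRing.Theory Num.Theory.
Import numFieldNormedType.Exports.
Local Open Scope ring_scope.

Definition inner (R : realType) m (g h : 'cV[R]_m) : R := (g^T *m h) 0 0.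

Definition qform (R : realType) m (B : 'M[R]_m) (t : 'cV[R]_m) : R :=
  inner (B *m t) t.

Definition posdef (R : realType) m (B : 'M[R]_m) : Prop :=
  B^T = B /\ forall t : 'cV[R]_m, t != 0 -> 0 < qform B t.

Definition bnorm (R : realType) m (B : 'M[R]_m) (t : 'cV[R]_m) : R :=
  Num.sqrt (qform B t).
Definition dnorm (R : realType) m (B : 'M[R]_m) (t : 'cV[R]_m) : R :=
  Num.sqrt (qform (invmx B) t).

(* U_i : the i-th column block of U : 'M_(N, N_1 + ... + N_n) *)
Definition Ublk (R : realType) (n : nat) (Ns : 'I_n -> nat) m
  (U : 'M[R]_(m, \sum_(i < n) Ns i)) (i : 'I_n) : 'M[R]_(m, Ns i) :=
  submxrow (q_ := Ns) U i.

Definition blk (R : realType) (n : nat) (Ns : 'I_n -> nat) m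
  (U : 'M[R]_(m, \sum_(i < n) Ns i)) (i : 'I_n) (x : 'cV[R]_m) : 'cV[R]_(Ns i) :=
  (Ublk U i)^T *m x.

Definition grad (R : realType) m (f : 'cV[R]_m -> R) (x : 'cV[R]_m) : 'cV[R]_m :=
  \col_j ('D_(delta_mx j 0) f x).

Definition convex_fun (R : realType) m (f : 'cV[R]_m -> R) : Prop :=
  forall (x y : 'cV[R]_m) (l : R), 0 <= l <= 1 ->
    f (l *: x + (1 - l) *: y) <= l * f x + (1 - l) * f y.

Local Open Scope ereal_scope.

Definition econvex (R : realType) m (g : 'cV[R]_m -> \bar R) : Prop :=
  forall (x y : 'cV[R]_m) (l : R), (0 < l < 1)%R ->
    g (l *: x + (1 - l) *: y)%R <= l%:E * g x + (1 - l)%:E * g y.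

Definition proper_fun (R : realType) m (g : 'cV[R]_m -> \bar R) : Prop :=
  (forall x, g x != -oo) /\ (exists x, g x \is a fin_num).

Definition proper_closed_convex (R : realType) m (g : 'cV[R]_m -> \bar R) : Prop :=
  [/\ proper_fun g, lower_semicontinuous g & econvex g].

Definition Fobj (R : realType) (n : nat) (Ns : 'I_n -> nat)
  (U : 'M[R]_(\sum_(i < n) Ns i))
  (f : 'cV[R]_(\sum_(i < n) Ns i) -> R) (Psi : forall i : 'I_n, 'cV[R]_(Ns i) -> \bar R)
  (x : 'cV[R]_(\sum_(i < n) Ns i)) : \bar R :=
  (f x)%:E + \sum_(i < n) Psi i (blk U i x).

Definition sqnormL (R : realType) (n : nat) (Ns : 'I_n -> nat) m
  (U : 'M[R]_(m, \sum_(i < n) Ns i)) (B : forall i : 'I_n, 'M[R]_(Ns i))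
  (L : 'I_n -> R) (x : 'cV[R]_m) : R :=
  (\sum_(i < n) L i * (bnorm (B i) (blk U i x)) ^+ 2)%R.

Definition subgrad (R : realType) m (F : 'cV[R]_m -> \bar R) (y g : 'cV[R]_m) : Prop :=
  forall x, F y + (inner g (x - y)%R)%:E <= F x.

Definition strongly_convex_L (R : realType) (n : nat) (Ns : 'I_n -> nat) m
  (U : 'M[R]_(m, \sum_(i < n) Ns i)) (B : forall i : 'I_n, 'M[R]_(Ns i))
  (L : 'I_n -> R) (F : 'cV[R]_m -> \bar R) (mu : R) : Prop :=
  forall x y : 'cV[R]_m, F x < +oo -> F y < +oo ->
    forall g, subgrad F y g ->
      F y + (inner g (x - y)%R)%:E + (mu / 2 * sqnormL U B L (x - y)%R)%:E <= F x.

(* the function minimized to get T^(i)(x):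
   <grad_i f(x), t> + L_i/2 ||t||_(i)^2 + Psi_i(x^(i) + t) *)
Definition Tobj (R : realType) (n : nat) (Ns : 'I_n -> nat)
  (U : 'M[R]_(\sum_(i < n) Ns i))
  (f : 'cV[R]_(\sum_(i < n) Ns i) -> R) (Psi : forall i : 'I_n, 'cV[R]_(Ns i) -> \bar R)
  (B : forall i : 'I_n, 'M[R]_(Ns i)) (L : 'I_n -> R)
  (i : 'I_n) (x : 'cV[R]_(\sum_(i < n) Ns i)) (t : 'cV[R]_(Ns i)) : \bar R :=
  (inner (blk U i (grad f x)) t + L i / 2 * (bnorm (B i) t) ^+ 2)%:E
  + Psi i (blk U i x + t)%R.

(* iterate of UCDC: x_{k} for the sequence of chosen blocks s = (i_0, ..., i_{k-1}) *)
Definition ucdc_iter (R : realType) (n : nat) (Ns : 'I_n -> nat)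
  (U : 'M[R]_(\sum_(i < n) Ns i))
  (T : forall i : 'I_n, 'cV[R]_(\sum_(i < n) Ns i) -> 'cV[R]_(Ns i))
  (x0 : 'cV[R]_(\sum_(i < n) Ns i)) (s : seq 'I_n) : 'cV[R]_(\sum_(i < n) Ns i) :=
  foldl (fun x i => (x + Ublk U i *m T i x)%R) x0 s.

(* expectation over k independent uniform choices in {1..n} *)
Definition expect_unif (R : realType) (n k : nat) (X : k.-tuple 'I_n -> \bar R) : \bar R :=
  ((n ^ k)%:R^-1)%R%:E * \sum_(s : k.-tuple 'I_n) X s.

Definition gamma_mu (R : realType) (mu : R) : R :=
  (if mu <= 2 then 1 - mu / 4 else mu^-1)%R.

Arguments Tobj {R n Ns} U f Psi B L i x t.

From HB Require Import structures.
From mathcomp Require Import all_boot all_order all_algebra.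
From mathcomp Require Import all_classical all_reals all_analysis.
From mathcomp Require Import ring lra.
Import Order.TTheory GRing.Theory Num.Theory.
Import numFieldNormedType.Exports.
Set Implicit Arguments. Unset Strict Implicit. Unset Printing Implicit Defensive.
Local Open Scope ring_scope.

(* Moving along block i only changes x^(i), and the block Lipschitz condition
   gives f(x + U_i t) <= f(x) + <grad_i f(x), t> + L_i/2 ||t||_(i)^2.  Hence a
   step at block i satisfies
     F(x + U_i T^(i)(x)) <= F(x) - Psi_i(x^(i)) + V_i(x, T^(i)(x)),
   where V_i is the function minimised by T^(i).  Averaging over the uniformly
   chosen i, E[F(x_{k+1}) | x_k] <= (1 - 1/n) F(x_k) + H(x_k)/n with the model
   value H(x) = f(x) + sum_i V_i(x, T^(i)(x)).  By minimality of T^(i) and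
   convexity of f, H(x) <= F(y) + ||y - x||_L^2 / 2 for every y.  Strong
   convexity at the minimiser, where 0 is a subgradient, gives
   mu/2 ||x - x^*||_L^2 <= F(x) - F^*; taking y = x^* if mu >= 2 and
   y = (mu/2) x^* + (1 - mu/2) x otherwise yields H(x) - F^* <= gamma_mu times
   the gap F(x) - F^*.  So the expected gap contracts by the factor
   1 - (1 - gamma_mu)/n at each step. *)

Section InnerProduct.
Variables (R : realType) (m : nat).
Implicit Types (a b c : 'cV[R]_m).

Lemma innerE a b : inner a b = \sum_j a j 0 * b j 0.
Proof. by rewrite /inner mxE; apply: eq_bigr => j _; rewrite mxE. Qed.

Lemma innerC a b : inner a b = inner b a.
Proof. by rewrite !innerE; apply: eq_bigr => j _; rewrite mulrC. Qed.

Lemma inner0r c : inner c 0 = 0.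
Proof. by rewrite /inner mulmx0 mxE. Qed.

Lemma inner0l c : inner 0 c = 0.
Proof. by rewrite innerC inner0r. Qed.

Lemma innerDr c a b : inner c (a + b) = inner c a + inner c b.
Proof. by rewrite !innerE -big_split; apply: eq_bigr => j _; rewrite mxE mulrDr. Qed.

Lemma innerZr (k : R) c a : inner c (k *: a) = k * inner c a.
Proof. by rewrite !innerE mulr_sumr; apply: eq_bigr => j _; rewrite mxE mulrCA. Qed.

Lemma innerBr c a b : inner c (a - b) = inner c a - inner c b.
Proof. by rewrite innerDr -scaleN1r innerZr mulN1r. Qed.

Lemma innerBl c a b : inner (a - b) c = inner a c - inner b c.
Proof. by rewrite !(innerC _ c) innerBr. Qed.

Lemma innerZl (k : R) c a : inner (k *: a) c = k * inner a c.
Proof. by rewrite !(innerC _ c) innerZr. Qed.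

Lemma inner_sumr (I : finType) c (G : I -> 'cV[R]_m) :
  inner c (\sum_i G i) = \sum_i inner c (G i).
Proof. by rewrite /inner mulmx_sumr summxE. Qed.

Lemma inner_mulmxr p c (A : 'M[R]_(m, p)) (t : 'cV[R]_p) :
  inner c (A *m t) = inner (A^T *m c) t.
Proof. by rewrite /inner trmx_mul trmxK mulmxA. Qed.

End InnerProduct.

Section PositiveDefinite.
Variables (R : realType) (m : nat) (B : 'M[R]_m).

Lemma qform0 : qform B 0 = 0.
Proof. by rewrite /qform mulmx0 inner0l. Qed.

Lemma qformZ (a : R) t : qform B (a *: t) = a ^+ 2 * qform B t.
Proof. by rewrite /qform -scalemxAr innerZl innerZr mulrA expr2. Qed.

Lemma bnormZ (a : R) t : bnorm B (a *: t) = `|a| * bnorm B t.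
Proof. by rewrite /bnorm qformZ sqrtrM ?sqrtr_sqr // sqr_ge0. Qed.

Hypothesis B_posdef : posdef B.

Lemma qform_ge0 t : 0 <= qform B t.
Proof.
have [->|t0] := eqVneq t 0; first by rewrite qform0.
by apply/ltW; case: B_posdef => _; apply.
Qed.

Lemma posdef_unitmx : B \in unitmx.
Proof.
case: B_posdef => Bsym Bpos; rewrite unitmxE unitfE; apply/negP => /det0P [v v0 vB].
have vT0 : v^T != 0 by apply: contra v0 => /eqP vT0; rewrite -[v]trmxK vT0 trmx0.
have := Bpos _ vT0; rewrite /qform.
by rewrite -{1}Bsym -trmx_mul vB trmx0 inner0l ltxx.
Qed.

Lemma inner_mulmx_sym u t : inner (B *m u) t = inner (B *m t) u.
Proof. by case: B_posdef => Bsym _; rewrite innerC inner_mulmxr Bsym. Qed.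

Lemma qform_cauchy_schwarz u t : inner (B *m u) t ^+ 2 <= qform B u * qform B t.
Proof.
set c := inner (B *m u) t.
have [t0|t0] := eqVneq t 0; first by rewrite /c t0 inner0r qform0 expr0n mulr0.
have qt_gt0 : 0 < qform B t by case: B_posdef => _; apply.
have expand l : qform B (u - l *: t) = qform B u - 2 * l * c + l ^+ 2 * qform B t.
  rewrite /qform mulmxBr -scalemxAr innerBl !innerBr !innerZl !innerZr.
  by rewrite (inner_mulmx_sym t u) -/c; ring.
(* evaluate the nonnegative quadratic l |-> <B (u - l t), u - l t> at its minimiser *)
have := qform_ge0 (u - (c / qform B t) *: t); rewrite expand.
have -> : qform B u - 2 * (c / qform B t) * c + (c / qform B t) ^+ 2 * qform B t
    = (qform B u * qform B t - c ^+ 2) / qform B t by field; rewrite gt_eqF.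
by rewrite ler_pdivlMr // mul0r subr_ge0.
Qed.

Lemma inner_le_dnorm_bnorm g t : inner g t <= dnorm B g * bnorm B t.
Proof.
set u := invmx B *m g.
have gE : g = B *m u by rewrite mulKVmx // posdef_unitmx.
have -> : dnorm B g = bnorm B u by rewrite /dnorm /bnorm /qform -/u {1}gE innerC.
rewrite gE /bnorm -sqrtrM ?qform_ge0 //.
apply: le_trans (ler_norm _) _; rewrite -sqrtr_sqr ler_sqrt ?mulr_ge0 ?qform_ge0 //.
exact: qform_cauchy_schwarz.
Qed.

End PositiveDefinite.

Lemma perm_mx_orthogonal (R : realType) m (U : 'M[R]_m) :
  is_perm_mx U -> U^T *m U = 1%:M /\ U *m U^T = 1%:M.
Proof.
case/is_perm_mxP => s ->.
have UUt : perm_mx s *m (perm_mx s)^T = 1%:M :> 'M[R]_m.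
  rewrite tr_perm_mx -perm_mxM -(perm_mx1 R m); congr perm_mx.
  by apply/perm.permP => i; rewrite perm.permM perm.permK perm.perm1.
by split=> //; apply: mulmx1C.
Qed.

Section Blocks.
Variables (R : realType) (n : nat) (Ns : 'I_n -> nat) (U : 'M[R]_(\sum_(i < n) Ns i)).

Lemma blkD i x y : blk U i (x + y) = blk U i x + blk U i y.
Proof. by rewrite /blk mulmxDr. Qed.

Lemma blkZ i (a : R) x : blk U i (a *: x) = a *: blk U i x.
Proof. by rewrite /blk scalemxAr. Qed.

Lemma blk_sum i (I : finType) (G : I -> 'cV[R]_(\sum_(j < n) Ns j)) :
  blk U i (\sum_k G k) = \sum_k blk U i (G k).
Proof. by rewrite /blk mulmx_sumr. Qed.

Lemma trUblk_mulmx_Ublk i j :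
  (Ublk U j)^T *m Ublk U i = submxblock (U^T *m U) j i.
Proof.
have Urow : U = \mxrow_j Ublk U j by rewrite /Ublk submxrowK.
by rewrite {3 4}Urow tr_mxrow mul_mxcol_mxrow mxblockK.
Qed.

Hypothesis U_perm : is_perm_mx U.

Let UtU_diag : U^T *m U = \mxdiag_(i < n) (1%:M : 'M[R]_(Ns i)).
Proof. by rewrite mxdiagZ; case: (perm_mx_orthogonal U_perm). Qed.

Lemma blk_Ublk i t : blk U i (Ublk U i *m t) = t.
Proof.
by rewrite /blk mulmxA trUblk_mulmx_Ublk UtU_diag /mxdiag mxblockK eqxx conform_mx_id mul1mx.
Qed.

Lemma blk_Ublk_neq i j t : j != i -> blk U j (Ublk U i *m t) = 0.
Proof.
by move=> ji; rewrite /blk mulmxA trUblk_mulmx_Ublk UtU_diag /mxdiag mxblockK (negPf ji) mul0mx.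
Qed.

Lemma blk_sum_Ublk (zs : forall i, 'cV[R]_(Ns i)) j :
  blk U j (\sum_i Ublk U i *m zs i) = zs j.
Proof.
rewrite blk_sum (bigD1 j) //= blk_Ublk big1 ?addr0 // => i ij.
by rewrite blk_Ublk_neq // eq_sym.
Qed.

Lemma sum_inner_blk g d : \sum_i inner (blk U i g) (blk U i d) = inner g d.
Proof.
have UUt : \sum_i (Ublk U i *m (Ublk U i)^T) = 1%:M.
  rewrite -mul_mxrow_mxcol -tr_mxrow /Ublk submxrowK.
  by case: (perm_mx_orthogonal U_perm).
rewrite -{2}(mul1mx d) -UUt mulmx_suml inner_sumr.
by apply: eq_bigr => i _; rewrite -mulmxA inner_mulmxr.
Qed.

End Blocks.

Section Calculus.
Variables (R : realType) (m : nat) (f : 'cV[R]_m -> R).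

Lemma inner_grad x v : differentiable f x -> inner (grad f x) v = 'd f x v.
Proof.
move=> df; rewrite innerE {2}(matrix_sum_delta v) linear_sum /=.
apply: eq_bigr => j _; rewrite big_ord1 linearZ /= mxE deriveE //.
by rewrite mulrC.
Qed.

Lemma convex_diff_le x y :
  convex_fun f -> differentiable f x -> f x + 'd f x (y - x) <= f y.
Proof.
move=> cf df; have dv : derivable f x (y - x) := diff_derivable df.
rewrite -deriveE //.
have quot_cvg : (h^-1 *: ((f \o shift x) (h *: (y - x)) - f x) @[h --> 0^'+]
    --> 'D_(y - x) f x)%classic by exact: cvg_dnbhs_at_right.
suff : 'D_(y - x) f x <= f y - f x by lra.
rewrite -(cvg_lim _ quot_cvg) //; apply: limr_le; first exact: cvgP quot_cvg.
near=> h.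
have h0 : 0 < h by near: h; exact: nbhs_right_gt.
have h1 : h <= 1 by near: h; apply: nbhs_right_le; exact: ltr01.
have := cf y x h; rewrite (ltW h0) h1 => /(_ isT).
have -> : h *: y + (1 - h) *: x = h *: (y - x) + x.
  by rewrite scalerBl scale1r scalerBr addrCA addrC.
rewrite /= /shift; set a := f (h *: (y - x) + x) => le_a.
have -> : h^-1 *: (a - f x) = (a - f x) / h by rewrite mulrC.
rewrite ler_pdivrMr //; nra.
Unshelve. all: by end_near.
Qed.

Hypothesis f_diff : forall z, differentiable f z.

Lemma is_derive_line x v (s : R) :
  is_derive s 1 (fun s => f (x + s *: v)) ('d f (x + s *: v) v).
Proof.
have E : (fun t : R => t^-1 *: (((fun s => f (x + s *: v)) \o shift s) (t *: 1) - f (x + s *: v)))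
   = (fun t => t^-1 *: ((f \o shift (x + s *: v)) (t *: v) - f (x + s *: v))).
  apply/funext => t /=; congr (_ *: (f _ - _)).
  by rewrite /shift /= scalerDl [t%:A]mulr1 addrCA addrA addrC.
split; first by rewrite /derivable E; exact: diff_derivable.
by rewrite /derive E -/(derive f _ v) deriveE.
Qed.

Lemma le_line_quadratic x v (c M : R) :
  (forall s, 0 < s < 1 -> 'd f (x + s *: v) v - c <= M * s) ->
  f (x + v) <= f x + c + M / 2.
Proof.
move=> deriv_le.
(* the bound makes phi nonincreasing on [0, 1] *)
pose phi s := f (x + s *: v) - (s * c + M / 2 * (s * s)).
have dphi (s : R) : is_derive s (1 : R) phi ('d f (x + s *: v) v - (c + M / 2 * (s + s))).
  apply: is_deriveB; first exact: is_derive_line.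
  by apply: is_derive_eq; rewrite scaler0 add0r /GRing.scale /= !mulr1.
have phi_cont : continuous phi.
  by move=> s; apply/differentiable_continuous/derivable1_diffP; case: (dphi s).
have phi_derivable (s : R) : derivable phi s 1 by case: (dphi s).
have dphi_le0 (s : R) : s \in `]0, 1[ -> derive1 phi s <= 0.
  rewrite in_itv /= => s01; rewrite derive1E (@derive_val _ _ _ _ _ _ _ (dphi s)).
  by have := deriv_le s s01; lra.
have := @ler0_derive1_le_cc R phi 0 1 (fun s _ => phi_derivable s) dphi_le0.
move=> /(_ (continuous_subspaceT phi_cont) 1 0).
rewrite !in_itv /= !lexx ler01 => /(_ isT isT isT).
rewrite /phi scale1r scale0r addr0 !mul0r !mul1r mulr0 addr0 subr0.
lra.
Qed.

End Calculus.

Lemma blk_lipschitz_upper_bound (R : realType) n (Ns : 'I_n -> nat)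
    (U : 'M[R]_(\sum_(i < n) Ns i)) (i : 'I_n) (Bi : 'M[R]_(Ns i))
    (f : 'cV[R]_(\sum_(i < n) Ns i) -> R) (Li : R) x t :
  posdef Bi -> (forall z, differentiable f z) -> 0 <= Li ->
  (forall z (u : 'cV[R]_(Ns i)),
     dnorm Bi (blk U i (grad f (z + Ublk U i *m u)) - blk U i (grad f z)) <= Li * bnorm Bi u) ->
  f (x + Ublk U i *m t) <= f x + inner (blk U i (grad f x)) t + Li / 2 * bnorm Bi t ^+ 2.
Proof.
move=> Bi_posdef f_diff Li_ge0 grad_lip.
rewrite mulrAC; apply: le_line_quadratic => // s /andP [s_gt0 s_lt1].
rewrite -inner_grad // inner_mulmxr -/(blk U i _) -/(blk U i _) -innerBl.
apply: le_trans (inner_le_dnorm_bnorm Bi_posdef _ _) _.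
have := grad_lip x (s *: t); rewrite -scalemxAr => lip.
apply: le_trans (ler_wpM2r (sqrtr_ge0 _) lip) _.
by rewrite bnormZ ger0_norm ?(ltW s_gt0) // -/(bnorm Bi t); lra.
Qed.

Section SquaredNormL.
Variables (R : realType) (n : nat) (Ns : 'I_n -> nat) (m : nat).
Variables (U : 'M[R]_(m, \sum_(i < n) Ns i)) (B : forall i : 'I_n, 'M[R]_(Ns i)) (L : 'I_n -> R).

Lemma sqnormLZ (a : R) v : sqnormL U B L (a *: v) = a ^+ 2 * sqnormL U B L v.
Proof.
rewrite /sqnormL mulr_sumr; apply: eq_bigr => i _.
by rewrite /blk -scalemxAr bnormZ exprMn real_normK ?num_real // mulrCA.
Qed.

Lemma sqnormLN v : sqnormL U B L (- v) = sqnormL U B L v.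
Proof. by rewrite -scaleN1r sqnormLZ sqrrN expr1n mul1r. Qed.

Lemma sqnormL_ge0 v : (forall i, 0 <= L i) -> 0 <= sqnormL U B L v.
Proof. by move=> L_ge0; apply: sumr_ge0 => i _; rewrite mulr_ge0 // sqr_ge0. Qed.

End SquaredNormL.

Lemma sum_tuple0 (T : finType) (V : nmodType) (G : 0.-tuple T -> V) :
  \sum_(s : 0.-tuple T) G s = G [tuple].
Proof. by rewrite (big_pred1 [tuple]) // => s; apply/esym/eqP; exact: tuple0. Qed.

Lemma sum_tuple_cons (T : finType) (V : nmodType) k (G : k.+1.-tuple T -> V) :
  \sum_(s : k.+1.-tuple T) G s = \sum_(i : T) \sum_(s : k.-tuple T) G [tuple of i :: s].
Proof.
rewrite pair_big (reindex (fun p : T * k.-tuple T => [tuple of p.1 :: p.2])) /=.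
  by apply: eq_bigl.
exists (fun t => (thead t, [tuple of behead t])) => [[i s] _ | t _] /=.
  by congr pair; apply: val_inj.
by apply: val_inj; rewrite /= {3}(tuple_eta t).
Qed.

Lemma fin_num_le (R : realType) (a b : \bar R) :
  (b <= a)%E -> a \is a fin_num -> b != -oo%E -> b \is a fin_num.
Proof.
move=> ba af bNy; rewrite fin_numE bNy /=.
by apply/eqP => bE; move: ba af; rewrite bE leye_eq => /eqP ->.
Qed.

Lemma gamma_mu_gt0 (R : realType) (mu : R) : 0 < mu -> 0 < gamma_mu mu.
Proof. by rewrite /gamma_mu; case: ifP => [mu_le2|_] mu_gt0; [lra | rewrite invr_gt0]. Qed.

Lemma gamma_mu_ge_inv (R : realType) (mu : R) : 2 <= mu -> mu^-1 <= gamma_mu mu.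
Proof.
rewrite /gamma_mu; case: ifP => // mu_le2 mu_ge2.
have -> : mu = 2 by apply/eqP; rewrite eq_le mu_le2 mu_ge2.
by rewrite le_eqVlt; apply/orP; left; apply/eqP; field.
Qed.

Lemma ucdc_rate_gt0 (R : realType) (mu : R) n :
  0 < mu -> (0 < n)%N -> 0 < 1 - (1 - gamma_mu mu) / n%:R.
Proof.
move=> mu_gt0 n_gt0; have := gamma_mu_gt0 mu_gt0.
have : 1 <= n%:R :> R by rewrite ler1n.
rewrite subr_gt0 ltr_pdivrMr ?ltr0n //; lra.
Qed.

Section UCDC.
Variables (R : realType) (n : nat) (Ns : 'I_n -> nat).
Variables (U : 'M[R]_(\sum_(i < n) Ns i)) (B : forall i : 'I_n, 'M[R]_(Ns i)).
Variables (f : 'cV[R]_(\sum_(i < n) Ns i) -> R) (Psi : forall i : 'I_n, 'cV[R]_(Ns i) -> \bar R).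
Variables (L : 'I_n -> R) (T : forall i : 'I_n, 'cV[R]_(\sum_(i < n) Ns i) -> 'cV[R]_(Ns i)).
Variable xstar : 'cV[R]_(\sum_(i < n) Ns i).
Arguments Psi : clear implicits.

Hypothesis U_perm : is_perm_mx U.
Hypothesis B_posdef : forall i, posdef (B i).
Hypothesis f_convex : convex_fun f.
Hypothesis f_diff : forall x, differentiable f x.
Hypothesis L_gt0 : forall i, 0 < L i.
Hypothesis grad_lip : forall i (x : 'cV[R]_(\sum_(j < n) Ns j)) (t : 'cV[R]_(Ns i)),
  dnorm (B i) (blk U i (grad f (x + Ublk U i *m t)) - blk U i (grad f x)) <= L i * bnorm (B i) t.
Hypothesis Psi_pcc : forall i, proper_closed_convex (Psi i).
Hypothesis xstar_min : forall x, (Fobj U f Psi xstar <= Fobj U f Psi x)%E.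
Hypothesis T_min : forall i x (t : 'cV[R]_(Ns i)),
  (Tobj U f Psi B L i x (T i x) <= Tobj U f Psi B L i x t)%E.

Let F := Fobj U f Psi.
Let step i x := x + Ublk U i *m T i x.
Let V i x t := Tobj U f Psi B L i x t.
Arguments V : clear implicits.
Let H x := f x + \sum_i fine (V i x (T i x)).

Lemma Psi_neqNy i z : Psi i z != -oo%E.
Proof. by case: (Psi_pcc i) => -[]. Qed.

Lemma Fobj_neqNy x : F x != -oo%E.
Proof.
rewrite /F /Fobj adde_eq_ninfty negb_or /=.
by apply/eqP => /esum_eqNyP [i [_ _ /eqP]]; apply/negP/Psi_neqNy.
Qed.

Lemma Fobj_fin_numP x : F x \is a fin_num <-> forall i, Psi i (blk U i x) \is a fin_num.
Proof.
rewrite /F /Fobj fin_numD /=; split.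
  by move=> /sum_fin_numP Psi_fin i; apply: Psi_fin => //; exact: mem_index_enum.
by move=> Psi_fin; apply/sum_fin_numP => i _ _; exact: Psi_fin.
Qed.

Lemma fine_Fobj x : F x \is a fin_num -> fine (F x) = f x + \sum_i fine (Psi i (blk U i x)).
Proof.
move=> /Fobj_fin_numP Psi_fin; rewrite /F /Fobj.
rewrite (eq_bigr (fun i => (fine (Psi i (blk U i x)))%:E)) => [|i _]; last by rewrite fineK.
by rewrite sumEFin -EFinD.
Qed.

Lemma Fobj_xstar_fin_num : F xstar \is a fin_num.
Proof.
have Psi_fin_somewhere i : exists z : 'cV[R]_(Ns i), Psi i z \is a fin_num.
  by case: (Psi_pcc i) => -[].
pose zs i := sval (cid (Psi_fin_somewhere i)).
have z_fin : F (\sum_i Ublk U i *m zs i) \is a fin_num.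
  by apply/Fobj_fin_numP => i; rewrite blk_sum_Ublk //; exact: (svalP (cid (Psi_fin_somewhere i))).
exact: fin_num_le (xstar_min _) z_fin (Fobj_neqNy _).
Qed.

Lemma Tobj_fin_num x i : F x \is a fin_num ->
  Psi i (blk U i x + T i x) \is a fin_num /\ V i x (T i x) \is a fin_num.
Proof.
move=> /Fobj_fin_numP Psi_fin.
have V0 : V i x 0 = Psi i (blk U i x).
  by rewrite /V /Tobj inner0r /bnorm qform0 sqrtr0 expr0n /= !mulr0 !addr0 add0e.
have V_fin : V i x (T i x) \is a fin_num.
  apply: (fin_num_le _ (Psi_fin i)); first by rewrite -V0; exact: T_min.
  by rewrite /V /Tobj adde_eq_ninfty negb_or /= Psi_neqNy.
by move: V_fin; rewrite /V /Tobj fin_numD /=.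
Qed.

Lemma fine_Tobj x i t : Psi i (blk U i x + t) \is a fin_num ->
  fine (V i x t) = inner (blk U i (grad f x)) t + L i / 2 * bnorm (B i) t ^+ 2
                   + fine (Psi i (blk U i x + t)).
Proof. by move=> Psi_fin; rewrite /V /Tobj -{1}(fineK Psi_fin). Qed.

Lemma blk_step i x : blk U i (step i x) = blk U i x + T i x.
Proof. by rewrite blkD blk_Ublk. Qed.

Lemma blk_step_neq i j x : j != i -> blk U j (step i x) = blk U j x.
Proof. by move=> ji; rewrite blkD blk_Ublk_neq // addr0. Qed.

Lemma Fobj_step_fin_num i x : F x \is a fin_num -> F (step i x) \is a fin_num.
Proof.
move=> x_fin; apply/Fobj_fin_numP => j; have [->|ji] := eqVneq j i.
  by rewrite blk_step; case: (Tobj_fin_num i x_fin).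
by rewrite blk_step_neq //; exact: (Fobj_fin_numP x).1 x_fin j.
Qed.

Lemma Fobj_step_le i x : F x \is a fin_num ->
  fine (F (step i x)) <= fine (F x) - fine (Psi i (blk U i x)) + fine (V i x (T i x)).
Proof.
move=> x_fin; have [Psi_step_fin _] := Tobj_fin_num i x_fin.
rewrite (fine_Tobj Psi_step_fin) !fine_Fobj ?Fobj_step_fin_num //.
rewrite (bigD1 i) //= blk_step [in X in _ <= X](bigD1 i) //=.
rewrite (eq_bigr (fun j => fine (Psi j (blk U j x)))) => [|j ji]; last by rewrite blk_step_neq.
have := blk_lipschitz_upper_bound x (T i x) (B_posdef i) f_diff (ltW (L_gt0 i)) (@grad_lip i).
rewrite -/(step i x); lra.
Qed.

Lemma sum_Fobj_step_le x : F x \is a fin_num ->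
  \sum_i fine (F (step i x)) <= (n%:R - 1) * fine (F x) + H x.
Proof.
move=> x_fin; apply: le_trans (ler_sum _ (fun i _ => Fobj_step_le i x_fin)) _.
rewrite !big_split /= sumrN sumr_const card_ord -mulr_natl /H.
have := fine_Fobj x_fin; lra.
Qed.

Lemma model_le x y : F x \is a fin_num -> F y \is a fin_num ->
  H x <= fine (F y) + sqnormL U B L (y - x) / 2.
Proof.
move=> x_fin y_fin.
have V_le i : fine (V i x (T i x)) <= inner (blk U i (grad f x)) (blk U i (y - x))
    + L i / 2 * bnorm (B i) (blk U i (y - x)) ^+ 2 + fine (Psi i (blk U i y)).
  have yE : blk U i x + blk U i (y - x) = blk U i y by rewrite -blkD addrC subrK.
  have Psi_y_fin : Psi i (blk U i x + blk U i (y - x)) \is a fin_num.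
    by rewrite yE; exact: (Fobj_fin_numP y).1 y_fin i.
  rewrite -yE -(fine_Tobj Psi_y_fin); apply: fine_le; last exact: T_min.
    exact: (Tobj_fin_num i x_fin).2.
  by rewrite /V /Tobj fin_numD /= Psi_y_fin.
rewrite /H; apply: le_trans (lerD (lexx _) (ler_sum _ (fun i _ => V_le i))) _.
rewrite !big_split /= sum_inner_blk // (fine_Fobj y_fin).
have -> : \sum_i L i / 2 * bnorm (B i) (blk U i (y - x)) ^+ 2 = sqnormL U B L (y - x) / 2.
  by rewrite /sqnormL mulr_suml; apply: eq_bigr => i _; rewrite mulrAC.
have := convex_diff_le y f_convex (f_diff x); rewrite -inner_grad //; lra.
Qed.

Lemma Fobj_convex a x y : 0 < a < 1 -> F x \is a fin_num -> F y \is a fin_num ->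
  F (a *: x + (1 - a) *: y) \is a fin_num /\
  fine (F (a *: x + (1 - a) *: y)) <= a * fine (F x) + (1 - a) * fine (F y).
Proof.
move=> a01 x_fin y_fin; set z := a *: x + (1 - a) *: y.
have Psi_z i : Psi i (blk U i z) \is a fin_num /\
    fine (Psi i (blk U i z))
      <= a * fine (Psi i (blk U i x)) + (1 - a) * fine (Psi i (blk U i y)).
  have Psi_x_fin := (Fobj_fin_numP x).1 x_fin i.
  have Psi_y_fin := (Fobj_fin_numP y).1 y_fin i.
  have Psi_z_le : (Psi i (blk U i z) <=
      (a * fine (Psi i (blk U i x)) + (1 - a) * fine (Psi i (blk U i y)))%:E)%E.
    rewrite EFinD !EFinM !fineK // /z blkD !blkZ.
    by case: (Psi_pcc i) => _ _; apply.
  have Psi_z_fin := fin_num_le Psi_z_le (erefl _) (Psi_neqNy _).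
  by split => //; rewrite -lee_fin fineK.
have z_fin : F z \is a fin_num by apply/Fobj_fin_numP => i; case: (Psi_z i).
split => //; rewrite !fine_Fobj //.
have : f z <= a * f x + (1 - a) * f y.
  by case/andP: a01 => a_gt0 a_lt1; apply: f_convex; rewrite !ltW.
have : \sum_i fine (Psi i (blk U i z)) <= a * \sum_i fine (Psi i (blk U i x))
    + (1 - a) * \sum_i fine (Psi i (blk U i y)).
  by rewrite !mulr_sumr -big_split; apply: ler_sum => i _; case: (Psi_z i).
lra.
Qed.

Lemma Fobj_ucdc_iter_fin_num s x :
  F x \is a fin_num -> F (ucdc_iter U T x s) \is a fin_num.
Proof. by elim: s x => [//|i s IH] x x_fin; apply/IH/Fobj_step_fin_num. Qed.

Variable mu : R.
Hypothesis mu_gt0 : 0 < mu.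
Hypothesis F_strong : strongly_convex_L U B L F mu.

Lemma Fobj_quadratic_growth x : F x \is a fin_num ->
  fine (F xstar) + mu / 2 * sqnormL U B L (x - xstar) <= fine (F x).
Proof.
move=> x_fin; have xs_fin := Fobj_xstar_fin_num.
have zero_subgrad : subgrad F xstar 0.
  by move=> w; rewrite inner0l adde0; exact: xstar_min.
have := @F_strong x xstar; rewrite !ltey_eq x_fin xs_fin.
move=> /(_ isT isT 0 zero_subgrad).
by rewrite inner0l adde0 -(fineK xs_fin) -(fineK x_fin) -EFinD lee_fin.
Qed.

Lemma model_le_gamma x : F x \is a fin_num ->
  H x <= fine (F xstar) + gamma_mu mu * (fine (F x) - fine (F xstar)).
Proof.
move=> x_fin; have xs_fin := Fobj_xstar_fin_num.
have growth := Fobj_quadratic_growth x_fin.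
set r := sqnormL U B L (x - xstar) in growth *.
have r_ge0 : 0 <= r by apply: sqnormL_ge0 => i; exact: ltW.
have [mu_lt2|mu_ge2] := ltrP mu 2.
  have a01 : 0 < mu / 2 < 1.
    by apply/andP; split; [have := mu_gt0 | have := mu_lt2]; lra.
  have [y_fin y_le] := Fobj_convex a01 xs_fin x_fin.
  set y := mu / 2 *: xstar + _ in y_fin y_le.
  have yx : y - x = mu / 2 *: (xstar - x).
    by rewrite /y scalerBl scale1r scalerBr addrA addrAC addrK.
  apply: le_trans (model_le x_fin y_fin) _.
  rewrite yx sqnormLZ -sqnormLN opprB -/r /gamma_mu (ifT _ _ (ltW mu_lt2)).
  have : 0 <= mu / 4 * (fine (F x) - fine (F xstar) - mu / 2 * r) by apply: mulr_ge0; lra.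
  nra.
apply: le_trans (model_le x_fin xs_fin) _; rewrite -sqnormLN opprB -/r.
have gamma_ge := gamma_mu_ge_inv mu_ge2.
have : r / 2 <= gamma_mu mu * (fine (F x) - fine (F xstar)).
  have -> : r / 2 = mu^-1 * (mu / 2 * r) by field; rewrite gt_eqF.
  apply: ler_pM => //; first by rewrite invr_ge0 ltW.
    by rewrite mulr_ge0 // divr_ge0 // ltW.
  lra.
lra.
Qed.

Lemma sum_Fobj_step_gap_le x : F x \is a fin_num ->
  \sum_i (fine (F (step i x)) - fine (F xstar))
    <= (n%:R - (1 - gamma_mu mu)) * (fine (F x) - fine (F xstar)).
Proof.
move=> x_fin; rewrite sumrB sumr_const card_ord -mulr_natl.
have := sum_Fobj_step_le x_fin; have := model_le_gamma x_fin; lra.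
Qed.

Hypothesis n_gt0 : (0 < n)%N.

Lemma expected_gap_le k x : F x \is a fin_num ->
  (n ^ k)%:R^-1 * \sum_(s : k.-tuple 'I_n) (fine (F (ucdc_iter U T x s)) - fine (F xstar))
    <= (1 - (1 - gamma_mu mu) / n%:R) ^+ k * (fine (F x) - fine (F xstar)).
Proof.
set c := 1 - _ / _; have c_ge0 : 0 <= c by apply/ltW/ucdc_rate_gt0.
have n_neq0 : n%:R != 0 :> R by rewrite pnatr_eq0 -lt0n.
have nc : n%:R * c = n%:R - (1 - gamma_mu mu).
  by rewrite /c mulrBr mulr1 mulrCA mulfV ?mulr1.
elim: k x => [|k IH] x x_fin; first by rewrite sum_tuple0 expn0 invr1 !mul1r.
rewrite sum_tuple_cons expnS natrM invfM -mulrA mulr_sumr.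
apply: le_trans (ler_wpM2l _ (ler_sum _ (fun i _ => IH _ (Fobj_step_fin_num i x_fin)))) _.
  by rewrite invr_ge0 ler0n.
rewrite -mulr_sumr exprSr.
apply: le_trans (ler_wpM2l _ (ler_wpM2l (exprn_ge0 _ c_ge0) (sum_Fobj_step_gap_le x_fin))) _.
  by rewrite invr_ge0 ler0n.
by rewrite -nc mulrCA !mulrA mulfVK.
Qed.

End UCDC.

Theorem theorem6 (R : realType) (n : nat) (Ns : 'I_n -> nat)
  (U : 'M[R]_(\sum_(i < n) Ns i))
  (B : forall i : 'I_n, 'M[R]_(Ns i))
  (f : 'cV[R]_(\sum_(i < n) Ns i) -> R)
  (Psi : forall i : 'I_n, 'cV[R]_(Ns i) -> \bar R)
  (L : 'I_n -> R) (mu : R)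
  (T : forall i : 'I_n, 'cV[R]_(\sum_(i < n) Ns i) -> 'cV[R]_(Ns i))
  (xstar x0 : 'cV[R]_(\sum_(i < n) Ns i)) (k : nat) :
  (0 < n)%N ->
  is_perm_mx U ->
  (forall i, posdef (B i)) ->
  convex_fun f ->
  (forall x, differentiable f x) ->
  (forall i, 0 < L i) ->
  (forall i (x : 'cV[R]_(\sum_(j < n) Ns j)) (t : 'cV[R]_(Ns i)),
     dnorm (B i) (blk U i (grad f (x + Ublk U i *m t)) - blk U i (grad f x))
       <= L i * bnorm (B i) t) ->
  (forall i, proper_closed_convex (Psi i)) ->
  (forall x, (Fobj U f Psi xstar <= Fobj U f Psi x)%E) ->
  (forall i x (t : 'cV[R]_(Ns i)),
     (Tobj U f Psi B L i x (T i x) <= Tobj U f Psi B L i x t)%E) ->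
  0 < mu ->
  strongly_convex_L U B L (Fobj U f Psi) mu ->
  (expect_unif (fun s : k.-tuple 'I_n =>
       Fobj U f Psi (ucdc_iter U T x0 s) - Fobj U f Psi xstar)
   <= ((1 - (1 - gamma_mu mu) / n%:R) ^+ k)%:E
      * (Fobj U f Psi x0 - Fobj U f Psi xstar))%E.
Proof.
move=> n_gt0 U_perm B_posdef f_convex f_diff L_gt0 grad_lip Psi_pcc xstar_min T_min.
move=> mu_gt0 F_strong; set F := Fobj U f Psi.
have xs_fin : F xstar \is a fin_num := Fobj_xstar_fin_num U_perm Psi_pcc xstar_min.
have [x0_fin|x0_infin] := boolP (F x0 \is a fin_num); last first.
  have -> : F x0 = +oo%E.
    by move: x0_infin; rewrite fin_numE Fobj_neqNy //= negbK => /eqP.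
  rewrite -(fineK xs_fin) -EFinN addye // mulry gtr0_sg ?mul1e ?leey //.
  by rewrite exprn_gt0 // ucdc_rate_gt0.
have iter_fin s : F (ucdc_iter U T x0 s) \is a fin_num.
  exact: Fobj_ucdc_iter_fin_num U_perm Psi_pcc T_min s x0 x0_fin.
rewrite /expect_unif.
under eq_bigr do rewrite -(fineK (iter_fin _)) -(fineK xs_fin) -EFinB.
rewrite sumEFin -EFinM -(fineK x0_fin) -(fineK xs_fin) -EFinB -EFinM lee_fin.
exact: expected_gap_le.
Qed.
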